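(* Let $\Gamma$ be a finitely generated infinite group, $\{\Gamma_n\}_{n\in\mathbb N}$ finite-index normal subgroups, $f\in\mathbb{R}\Gamma$ well-balanced and $g\in\mathbb{R}\Gamma$. There exists $C>0$ such that whenever $\pi_n(g)=h\,\pi_n(f)$ for some $n\in\mathbb{N}$ and $h\in\mathbb{R}(\Gamma/\Gamma_n)$, one has $$\max_{s\Gamma_n\in\Gamma/\Gamma_n}h_{s\Gamma_n}-\min_{s\Gamma_n\in\Gamma/\Gamma_n}h_{s\Gamma_n}\le C.$$
   Context: $f\in\mathbb{R}\Gamma$ is well-balanced if $\sum_sf_s=0$, $f_s\le0$ for $s\ne e$, $f_s=f_{s^{-1}}$, and the support of $f$ generates $\Gamma$. $\pi_n:\mathbb{R}\Gamma\to\mathbb{R}(\Gamma/\Gamma_n)$ is the ring homomorphism induced by the quotient map, $\pi_n(g)_{s\Gamma_n}=\sum_{t\in s\Gamma_n}g_t$; products in $\mathbb{R}(\Gamma/\Gamma_n)$ are convolutions over the finite group $\Gamma/\Gamma_n$. *)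

From Stdlib Require Import Reals List Classical ClassicalEpsilon.
Open Scope R_scope.

Record Group := {
  carrier :> Type;
  gmul : carrier -> carrier -> carrier;
  ginv : carrier -> carrier;
  gone : carrier;
  gmulA : forall x y z, gmul x (gmul y z) = gmul (gmul x y) z;
  gmul1l : forall x, gmul gone x = x;
  gmulVl : forall x, gmul (ginv x) x = gone }.
Arguments gmul {_} _ _.
Arguments ginv {_} _.
Arguments gone {_}.

Inductive gen {G : Group} (S : G -> Prop) : G -> Prop :=
| gen_one : gen S gone
| gen_base x : S x -> gen S x
| gen_mul x y : gen S x -> gen S y -> gen S (gmul x y)
| gen_inv x : gen S x -> gen S (ginv x).

Definition finitely_generated (G : Group) : Prop :=
  exists l : list G, forall x, gen (fun s => In s l) x.

Definition infinite_group (G : Group) : Prop :=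
  ~ exists l : list G, forall x : G, In x l.

Definition is_subgroup {G : Group} (H : G -> Prop) : Prop :=
  H gone /\ (forall x y, H x -> H y -> H (gmul x y)) /\ (forall x, H x -> H (ginv x)).

Definition is_normal {G : Group} (H : G -> Prop) : Prop :=
  forall g x, H x -> H (gmul (ginv g) (gmul x g)).

Definition finite_index {G : Group} (H : G -> Prop) : Prop :=
  exists l : list G, forall x, exists r, In r l /\ H (gmul (ginv r) x).

Definition is_transversal {G : Group} (H : G -> Prop) (l : list G) : Prop :=
  NoDup l /\ (forall x, exists r, In r l /\ H (gmul (ginv r) x)) /\
  (forall r1 r2, In r1 l -> In r2 l -> H (gmul (ginv r1) r2) -> r1 = r2).

Definition transversal {G : Group} (H : G -> Prop) : list G :=
  epsilon (inhabits nil) (is_transversal H).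

Definition lsum {A : Type} (l : list A) (F : A -> R) : R :=
  fold_right (fun a acc => F a + acc) 0 l.

(* Elements of RG: finitely supported functions G -> R. *)
Definition finsupp {G : Group} (f : G -> R) : Prop :=
  exists l : list G, forall x, f x <> 0 -> In x l.

Definition supp_list {G : Group} (f : G -> R) : list G :=
  epsilon (inhabits nil) (fun l => NoDup l /\ forall x, f x <> 0 -> In x l).

Definition total {G : Group} (f : G -> R) : R := lsum (supp_list f) f.

Definition well_balanced {G : Group} (f : G -> R) : Prop :=
  finsupp f /\ total f = 0 /\
  (forall s, s <> gone -> f s <= 0) /\
  (forall s, f s = f (ginv s)) /\
  (forall x, gen (fun s => f s <> 0) x).

(* Elements of R(G/H) are represented as functions G -> R constant on cosets. *)
Definition coset_invariant {G : Group} (H : G -> Prop) (h : G -> R) : Prop :=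
  forall x y, H (gmul (ginv x) y) -> h x = h y.

(* pi_H(g)_{sH} = sum_{t in sH} g_t *)
Definition proj {G : Group} (H : G -> Prop) (g : G -> R) : G -> R :=
  fun s => lsum (supp_list g)
    (fun t => if excluded_middle_informative (H (gmul (ginv s) t)) then g t else 0).

(* convolution in R(G/H): (a b)_{xH} = sum_{rH in G/H} a_{rH} b_{r^-1 x H} *)
Definition qconv {G : Group} (H : G -> Prop) (a b : G -> R) : G -> R :=
  fun x => lsum (transversal H) (fun r => a r * b (gmul (ginv r) x)).

From Stdlib Require Import Reals Lra List Classical ClassicalEpsilon.
From mathcomp Require Import ssreflect ssrfun ssrbool eqtype ssrnat seq fintype.
From mathcomp Require Import bigop ssralg zmodp matrix mxalgebra Rstruct.
Import GRing.Theory.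

(* Fix a normal subgroup N of finite index and put F := pi_N(f).  Right
   convolution  L u := u * F  acts on class functions u of G/N like a graph
   Laplacian: for every x the values F (r^-1 x) sum to 0 over r in G/N, and
   they are <= 0 off the coset of x because f is <= 0 off the identity.
   1. Maximum principle: if (L u) <= 0 outside the coset of a, then u is
      maximal at a.  Indeed the set where u is maximal is stable under right
      multiplication by supp f, which generates G.  Hence ker L = constants.
   2. By finite-dimensional linear algebra, L then maps onto the class
      functions whose sum over G/N vanishes.
   3. Dipoles: [dipole_bound t K] says that L u = 1_{tN} - 1_N has a solution
      of oscillation <= K.  It holds for t in supp f with K = |1/f_t| (the
      maximum principle at both poles), and is stable under products and
      inverses, so every t has such a bound K_t that does not depend on N.
   4. Since pi_N(g) = sum_t g_t 1_{tN}, superposing dipoles yields u with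
      L u = pi_N(g) - (sum_t g_t) 1_N and oscillation <= sum_t |g_t| K_t.  If
      L h = pi_N(g), then L (h - u) is a multiple of 1_N whose sum vanishes,
      so h - u is constant and h oscillates no more than u. *)

Open Scope R_scope.

Section GroupFacts.
Context {G : Group}.
Implicit Types x y z : G.

Lemma gmulA' x y z : gmul (gmul x y) z = gmul x (gmul y z).
Proof. by rewrite gmulA. Qed.

Lemma gmulV x : gmul x (ginv x) = gone.
Proof.
transitivity (gmul (gmul (ginv (ginv x)) (ginv x)) (gmul x (ginv x))).
  by rewrite gmulVl gmul1l.
by rewrite -gmulA (gmulA _ (ginv x) x (ginv x)) gmulVl gmul1l gmulVl.
Qed.

Lemma gmulr1 x : gmul x gone = x.
Proof. by rewrite -(gmulVl _ x) gmulA gmulV gmul1l. Qed.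

Lemma gmulKV x y : gmul (ginv x) (gmul x y) = y.
Proof. by rewrite gmulA gmulVl gmul1l. Qed.

Lemma gmulVK x y : gmul x (gmul (ginv x) y) = y.
Proof. by rewrite gmulA gmulV gmul1l. Qed.

Lemma ginv_uniq x y : gmul x y = gone -> ginv x = y.
Proof. by move=> H; rewrite -(gmulr1 (ginv x)) -H gmulKV. Qed.

Lemma ginvK x : ginv (ginv x) = x.
Proof. exact/ginv_uniq/gmulVl. Qed.

Lemma ginvM x y : ginv (gmul x y) = gmul (ginv y) (ginv x).
Proof. by apply: ginv_uniq; rewrite gmulA' gmulVK gmulV. Qed.

Lemma ginv1 : ginv (@gone G) = gone.
Proof. exact/ginv_uniq/gmul1l. Qed.

Lemma gen_right_stable (S P : G -> Prop) :
  (forall s, S s -> S (ginv s)) -> (forall x s, P x -> S s -> P (gmul x s)) ->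
  forall z, gen S z -> forall x, P x -> P (gmul x z).
Proof.
move=> Ssym PS z Hz.
suff: forall x, P x -> P (gmul x z) /\ P (gmul x (ginv z)) by move=> H x /H[].
elim: Hz => {z} [|s Ss|a b _ IHa _ IHb|a _ IH] x Px.
- by rewrite ginv1 gmulr1.
- by split; apply: PS => //; apply: Ssym.
- rewrite ginvM !gmulA; split.
  + exact: (proj1 (IHb _ (proj1 (IHa _ Px)))).
  + exact: (proj2 (IHa _ (proj2 (IHb _ Px)))).
- by rewrite ginvK; case: (IH _ Px).
Qed.

End GroupFacts.

Ltac gsimpl := do 2 rewrite ?ginvM ?ginvK ?ginv1 ?gmulA' ?gmul1l ?gmulr1
  ?gmulVl ?gmulV ?gmulKV ?gmulVK.

Arguments lsum {A} l F : simpl never.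

Section ListSums.
Context {A : Type}.
Implicit Types (l : list A) (F H : A -> R).

Lemma lsum_nil F : lsum nil F = 0. Proof. by []. Qed.
Lemma lsum_cons a l F : lsum (a :: l) F = F a + lsum l F. Proof. by []. Qed.

Lemma lsum_ext l F H : (forall a, In a l -> F a = H a) -> lsum l F = lsum l H.
Proof.
elim: l => [|a l IH] FH //; rewrite !lsum_cons FH; last by left.
by rewrite IH // => b Hb; apply: FH; right.
Qed.

Lemma lsum_plus l F H : lsum l (fun a => F a + H a) = lsum l F + lsum l H.
Proof. elim: l => [|a l IH]; rewrite ?lsum_nil ?lsum_cons ?IH; lra. Qed.

Lemma lsum_minus l F H : lsum l (fun a => F a - H a) = lsum l F - lsum l H.
Proof. elim: l => [|a l IH]; rewrite ?lsum_nil ?lsum_cons ?IH; lra. Qed.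

Lemma lsum_scal l c F : lsum l (fun a => c * F a) = c * lsum l F.
Proof. elim: l => [|a l IH]; rewrite ?lsum_nil ?lsum_cons ?IH; lra. Qed.

Lemma lsum_zero l F : (forall a, In a l -> F a = 0) -> lsum l F = 0.
Proof. by move=> /lsum_ext ->; elim: l => // a l; rewrite lsum_cons => ->; lra. Qed.

Lemma lsum_single l F a : NoDup l -> In a l ->
  (forall b, In b l -> b <> a -> F b = 0) -> lsum l F = F a.
Proof.
elim: l => [|c l IH] //= /NoDup_cons_iff[cNl NDl] Ha Fz; rewrite lsum_cons.
case: Ha => [ca|Ha].
- subst c; rewrite lsum_zero; first lra.
  by move=> b Hb; apply: Fz; [right | move=> ba; apply: cNl; rewrite -ba].
- have -> : F c = 0 by apply: Fz; [left | move=> ca; apply: cNl; rewrite ca].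
  have -> : lsum l F = F a by apply: IH => // b Hb; apply: Fz; right.
  lra.
Qed.

Lemma lsum_nonpos l F : (forall a, In a l -> F a <= 0) -> lsum l F <= 0.
Proof.
elim: l => [|a l IH] Fn; rewrite ?lsum_nil ?lsum_cons; first lra.
have := Fn a (or_introl erefl); have := IH (fun b Hb => Fn b (or_intror Hb)); lra.
Qed.

Lemma lsum_le_term l F a : In a l -> (forall b, In b l -> F b <= 0) -> lsum l F <= F a.
Proof.
elim: l => [|b l IH] //= Ha Fn; rewrite lsum_cons.
have Fl : forall c, In c l -> F c <= 0 by move=> c Hc; apply: Fn; right.
have := Fn b (or_introl erefl); have := @lsum_nonpos l F Fl.
by case: Ha => [<-|Ha]; [|have := IH Ha Fl]; lra.
Qed.

Lemma list_argmax l F : l <> nil -> exists m, In m l /\ forall a, In a l -> F a <= F m.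
Proof.
elim: l => [|a [|b l] IH] // _; first by exists a; split; [left | move=> r [<-|[]]; lra].
have [m [Hm Fm]] := IH ltac:(discriminate).
case: (Rle_dec (F a) (F m)) => am.
- by exists m; split; [right | move=> r [<-|/Fm]].
- exists a; split; first by left.
  by move=> r [<-|/Fm]; lra.
Qed.

(* List sums as MathComp big sums, to pass to matrices. *)
Lemma lsum_big (x0 : A) l F : lsum l F = (\sum_(i < size l) F (List.nth i l x0))%R.
Proof. by elim: l => [|a l IH]; rewrite ?big_ord0 // big_ord_recl -IH. Qed.

End ListSums.

Lemma lsum_swap {A B} (l : list A) (l' : list B) (F : A -> B -> R) :
  lsum l (fun a => lsum l' (F a)) = lsum l' (fun b => lsum l (fun a => F a b)).
Proof.
elim: l => [|a l IH]; first by rewrite lsum_nil lsum_zero.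
by rewrite lsum_cons IH -lsum_plus; apply: lsum_ext => b _; rewrite lsum_cons.
Qed.

(* Fredholm alternative for a "Laplacian" matrix: if every row of A sums to 0
   and the only row vectors v with v A = 0 are constant, then A has rank k - 1
   and its row space is exactly the space of row vectors with zero sum. *)
Section Fredholm.
Local Open Scope ring_scope.

Lemma zero_sum_in_row_space (k : nat) (A : 'M[R]_k) : (0 < k)%N ->
  A *m (const_mx 1 : 'cV[R]_k) = 0 ->
  (forall v : 'rV[R]_k, v *m A = 0 -> forall i j, v 0 i = v 0 j) ->
  forall b : 'rV[R]_k, b *m (const_mx 1 : 'cV[R]_k) = 0 -> exists v, v *m A = b.
Proof.
move=> k0 A1 Aker b b1.
set one := (const_mx 1 : 'cV[R]_k).
have ker_const : (kermx A <= (const_mx 1 : 'rV[R]_k))%MS.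
  apply/row_subP => i.
  have := Aker (row i (kermx A)).
  rewrite -row_mul mulmx_ker row0 => /(_ erefl) Hc.
  have -> : row i (kermx A) = row i (kermx A) 0 (Ordinal k0) *: (const_mx 1 : 'rV[R]_k).
    by apply/rowP => j; rewrite [RHS]mxE [X in _ * X]mxE mulr1; apply: Hc.
  exact: scalemx_sub.
have rk_ker : (\rank (kermx A) <= 1)%N.
  by apply: leq_trans (mxrankS ker_const) _; apply: rank_leq_row.
rewrite mxrank_ker in rk_ker.
have rk_one : \rank one = 1%N.
  have nz : one^T != 0.
    by apply/eqP => /rowP /(_ (Ordinal k0)); rewrite !mxE => /eqP; rewrite oner_eq0.
  by rewrite -mxrank_tr rank_rV nz.
have A_sub : (A <= kermx one)%MS by apply/sub_kermxP.
have sub_A : (kermx one <= A)%MS.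
  have := mxrank_leqif_sup A_sub; rewrite mxrank_ker rk_one => Heq.
  have : (k - 1 <= \rank A)%N by rewrite leq_subLR addnC -leq_subLR.
  by move=> Hle; rewrite -(geq_leqif Heq).
have b_sub : (b <= kermx one)%MS by apply/sub_kermxP.
have /submxP [D ->] := submx_trans b_sub sub_A.
by exists D.
Qed.

Lemma zero_sum_solvable {X} (T : list X) (x0 : X) (a : X -> X -> R) :
  NoDup T -> T <> nil ->
  (forall i, In i T -> lsum T (a i) = 0) ->
  (forall x : X -> R, (forall j, In j T -> lsum T (fun i => x i * a i j) = 0) ->
      forall i j, In i T -> In j T -> x i = x j) ->
  forall b : X -> R, lsum T b = 0 ->
  exists x : X -> R, forall j, In j T -> lsum T (fun i => x i * a i j) = b j.
Proof.
move=> TND Tnil Arow Aker b b0.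
set k := size T; set at_ := fun i : 'I_k => List.nth i T x0.
have k0 : (0 < k)%N by rewrite /k; case: (T) Tnil.
have at_inj : injective at_.
  move=> i j /(proj1 (NoDup_nth T x0) TND i j) E.
  by apply/val_inj/E; apply/ltP; apply: ltn_ord.
have at_onto : forall j, In j T -> exists i : 'I_k, at_ i = j.
  by move=> j /(In_nth T j x0) [n [/ltP Hn <-]]; exists (Ordinal Hn).
have at_in : forall i, In (at_ i) T by move=> i; apply: nth_In; apply/ltP.
pose A : 'M[R]_k := \matrix_(i, j) a (at_ i) (at_ j).
(* A row vector v read back as a function on X, supported on T. *)
pose fun_of (v : 'rV[R]_k) (z : X) : R :=
  (\sum_(i < k) if excluded_middle_informative (z = at_ i) then v 0 i else 0)%R.
have fun_ofE : forall v j, fun_of v (at_ j) = v 0 j.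
  move=> v j; rewrite /fun_of (bigD1 j) //= big1 ?addr0.
    by case: excluded_middle_informative.
  move=> i /negPf ij; case: excluded_middle_informative => // ji.
  by rewrite (at_inj _ _ ji) eqxx in ij.
have mulE : forall v j, lsum T (fun i => fun_of v i * a i (at_ j)) = (v *m A) 0 j.
  move=> v j; rewrite (lsum_big x0) !mxE; apply: eq_bigr => i _.
  by rewrite fun_ofE mxE.
have A1 : A *m (const_mx 1 : 'cV[R]_k) = 0.
  apply/matrixP => i j; rewrite !mxE -[RHS](Arow (at_ i) (at_in i)).
  by rewrite (lsum_big x0); apply: eq_bigr => l _; rewrite !mxE mulr1.
have Aker' : forall v : 'rV[R]_k, v *m A = 0 -> forall i j, v 0 i = v 0 j.
  move=> v vA i j; rewrite -!fun_ofE; apply: Aker; try exact: at_in.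
  by move=> l /at_onto [l' <-]; rewrite mulE vA mxE.
pose bv : 'rV[R]_k := \row_j b (at_ j).
have bv1 : bv *m (const_mx 1 : 'cV[R]_k) = 0.
  apply/matrixP => i j; rewrite !mxE -[RHS]b0 (lsum_big x0).
  by apply: eq_bigr => l _; rewrite !mxE mulr1.
have [v vA] := zero_sum_in_row_space _ _ k0 A1 Aker' _ bv1.
by exists (fun_of v) => j /at_onto [j' <-]; rewrite mulE vA mxE.
Qed.

End Fredholm.

Lemma supp_list_spec {G : Group} (g : G -> R) : finsupp g ->
  NoDup (supp_list g) /\ forall x, g x <> 0 -> In x (supp_list g).
Proof.
move=> [l Hl]; rewrite /supp_list.
apply: (epsilon_spec _ (fun l => NoDup l /\ forall x, g x <> 0 -> In x l)).
exists (nodup (fun x y : G => excluded_middle_informative (x = y)) l).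
split; first exact: NoDup_nodup.
by move=> x /Hl; rewrite nodup_In.
Qed.

(* Class functions on G/N, for a fixed normal subgroup N of finite index.
   Elements of R(G/N) are functions on G that are constant on cosets, and
   sums over G/N are sums over the transversal T. *)
Section Quotient.
Variable G : Group.
Variable N : G -> Prop.
Hypothesis N_sub : is_subgroup N.
Hypothesis N_normal : is_normal N.
Hypothesis N_index : finite_index N.

Local Notation E a b := (N (gmul (ginv a) b)).
Local Notation dec := excluded_middle_informative.
Local Notation "'IF' P 'THEN' a 'ELSE' b" :=
  (match excluded_middle_informative P with left _ => a | right _ => b end)
  (at level 200, right associativity).

Lemma N1 : N gone. Proof. by case: N_sub. Qed.
Lemma Nmul {x y} : N x -> N y -> N (gmul x y). Proof. by case: N_sub => _ [H _]; apply: H. Qed.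
Lemma Ninv {x} : N x -> N (ginv x). Proof. by case: N_sub => _ [_ H]; apply: H. Qed.
Lemma Nconj g {x} : N x -> N (gmul g (gmul x (ginv g))).
Proof. by move=> /(N_normal (ginv g)); rewrite ginvK. Qed.

Lemma E_refl a : E a a. Proof. rewrite gmulVl; exact: N1. Qed.
Lemma E_sym {a b} : E a b -> E b a. Proof. by move=> /Ninv; rewrite ginvM ginvK. Qed.
Lemma E_trans {a b c} : E a b -> E b c -> E a c.
Proof. by move=> H1 H2; have := Nmul H1 H2; gsimpl. Qed.
Lemma E_lmul x a b : E (gmul x a) (gmul x b) <-> E a b. Proof. by gsimpl. Qed.

Lemma ifE {P Q : Prop} (a b : R) : (P <-> Q) -> (IF P THEN a ELSE b) = (IF Q THEN a ELSE b).
Proof. by move=> PQ; case: (dec P) => HP; case: (dec Q) => HQ //; exfalso; tauto. Qed.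

(* Removing from a list of coset representatives every element that has a
   later representative of its coset: this turns the finite-index witness into
   a transversal, so [transversal N] is one. *)
Fixpoint coset_dedup (l : list G) : list G :=
  match l with
  | nil => nil
  | r :: l' =>
      IF (exists r', In r' l' /\ E r r') THEN coset_dedup l' ELSE r :: coset_dedup l'
  end.

Lemma coset_dedup_sub {l r} : In r (coset_dedup l) -> In r l.
Proof.
elim: l => [|a l IH] //=; case: dec => _ H; first by right; apply: IH.
by case: H => [->|/IH]; [left | right].
Qed.

Lemma coset_dedup_cover {l r} : In r l -> exists r', In r' (coset_dedup l) /\ E r r'.
Proof.
elim: l r => [|a l IH] r //= [<-|Hr]; case: dec => Hd.
- case: Hd => r' [/IH [r'' [H1 H2]] He]; exists r''; split => //; exact: E_trans He H2.
- by exists a; split; [left | apply: E_refl].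
- exact: IH.
- by have [r' [H1 H2]] := IH _ Hr; exists r'; split => //; right.
Qed.

Lemma coset_dedup_uniq l r1 r2 :
  In r1 (coset_dedup l) -> In r2 (coset_dedup l) -> E r1 r2 -> r1 = r2.
Proof.
elim: l => [|a l IH] //=; case: dec => Hd; first exact: IH.
move=> [<-|H1] [<-|H2] He //; try exact: IH.
- by exfalso; apply: Hd; exists r2; split => //; apply: coset_dedup_sub.
- by exfalso; apply: Hd; exists r1; split; [apply: coset_dedup_sub | apply: E_sym].
Qed.

Lemma coset_dedup_nodup l : NoDup (coset_dedup l).
Proof.
elim: l => [|a l IH] /=; first by constructor.
case: dec => Hd //; constructor => // H; apply: Hd.
by exists a; split; [apply: coset_dedup_sub | apply: E_refl].
Qed.

Lemma transversal_spec : is_transversal N (transversal N).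
Proof.
rewrite /transversal; apply: (epsilon_spec _ (is_transversal N)).
case: N_index => l Hl; exists (coset_dedup l); split; [exact: coset_dedup_nodup | split].
- move=> x; have [r [/coset_dedup_cover [r' [H1 H2]] He]] := Hl x.
  by exists r'; split => //; apply: E_trans (E_sym H2) He.
- exact: coset_dedup_uniq.
Qed.

Local Notation T := (transversal N).

Lemma T_nodup : NoDup T. Proof. by case: transversal_spec. Qed.
Lemma T_cover x : exists r, In r T /\ E r x.
Proof. by case: transversal_spec => _ [H _]; apply: H. Qed.
Lemma T_uniq {r1 r2} : In r1 T -> In r2 T -> E r1 r2 -> r1 = r2.
Proof. by case: transversal_spec => _ [_ H]; apply: H. Qed.
Lemma T_nil : T <> nil. Proof. by have [r [Hr _]] := T_cover gone; case: (T) Hr. Qed.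

Lemma sum_T_pick_rep (psi : G -> R) {c r0} : In r0 T -> E r0 c ->
  lsum T (fun r => IF E r c THEN psi r ELSE 0) = psi r0.
Proof.
move=> Hr0 Hc; rewrite (lsum_single T _ r0 T_nodup Hr0); first by case: dec.
move=> r Hr rr0; case: dec => // Hrc; case: rr0.
by apply: T_uniq => //; apply: E_trans Hrc (E_sym Hc).
Qed.

Lemma sum_T_pick (psi : G -> R) c : coset_invariant N psi ->
  lsum T (fun r => IF E r c THEN psi r ELSE 0) = psi c.
Proof. by move=> Hpsi; have [r0 [H1 H2]] := T_cover c; rewrite (sum_T_pick_rep _ H1 H2); apply: Hpsi. Qed.

Lemma sum_T_const (v : R) c : lsum T (fun r => IF E r c THEN v ELSE 0) = v.
Proof. exact: (sum_T_pick (fun _ => v)). Qed.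

(* Left translation permutes G/N. *)
Lemma sum_T_translate (phi : G -> R) (y : G) : coset_invariant N phi ->
  lsum T (fun r => phi (gmul y r)) = lsum T phi.
Proof.
move=> Hphi; rewrite (lsum_ext T (fun r => phi (gmul y r))
  (fun r => lsum T (fun r' => IF E r' (gmul y r) THEN phi r' ELSE 0))); last first.
  by move=> r _; rewrite sum_T_pick.
rewrite -lsum_swap; apply: lsum_ext => r' _.
rewrite (lsum_ext T _ (fun r => IF E r (gmul (ginv y) r') THEN phi r' ELSE 0)).
  exact: sum_T_const.
by move=> r _ /=; apply: ifE; split => /Ninv; gsimpl.
Qed.

Variable f : G -> R.
Hypothesis Hf : well_balanced f.
Local Notation F := (proj N f).

Lemma f_supp : NoDup (supp_list f) /\ forall x, f x <> 0 -> In x (supp_list f).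
Proof. by apply: supp_list_spec; case: Hf. Qed.
Lemma f_total : lsum (supp_list f) f = 0. Proof. by case: Hf => _ []. Qed.
Lemma f_nonpos t : t <> gone -> f t <= 0. Proof. by case: Hf => _ [_ [H _]]; apply: H. Qed.
Lemma f_sym t : f t = f (ginv t). Proof. by case: Hf => _ [_ [_ [H _]]]; apply: H. Qed.
Lemma f_gen x : gen (fun s => f s <> 0) x. Proof. by case: Hf => _ [_ [_ [_ H]]]; apply: H. Qed.

Lemma not_N_neq1 {t} : ~ N t -> t <> gone. Proof. by move=> Nt t1; apply: Nt; rewrite t1; apply: N1. Qed.

Lemma f_neg {t} : f t <> 0 -> ~ N t -> f t < 0.
Proof. by move=> ft /not_N_neq1 /f_nonpos; lra. Qed.

Lemma F_ci : coset_invariant N F.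
Proof.
move=> x y Hxy; apply: lsum_ext => t _ /=; apply: ifE.
by split => H; [apply: E_trans (E_sym Hxy) H | apply: E_trans Hxy H].
Qed.

Lemma F_inv_ci {r r'} w : E r r' -> F (gmul (ginv r) w) = F (gmul (ginv r') w).
Proof. by move=> H; apply: F_ci; have := Nconj (ginv w) (Nconj r (Ninv H)); gsimpl. Qed.

Lemma F_sum_translate (y : G) : lsum T (fun r => F (gmul y r)) = 0.
Proof.
rewrite /proj lsum_swap -[RHS]f_total; apply: lsum_ext => t _.
rewrite (lsum_ext T _ (fun r => IF E r (gmul (ginv y) t) THEN f t ELSE 0)).
  exact: sum_T_const.
by move=> r _ /=; apply: ifE; gsimpl.
Qed.

Lemma F_sum_inv (x : G) : lsum T (fun r => F (gmul (ginv r) x)) = 0.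
Proof.
rewrite /proj lsum_swap -[RHS]f_total; apply: lsum_ext => t _.
rewrite (lsum_ext T _ (fun r => IF E r (gmul x (ginv t)) THEN f t ELSE 0)).
  exact: sum_T_const.
move=> r _ /=; apply: ifE; split => H.
- by have := Ninv (Nconj t H); gsimpl.
- by have := Nconj (ginv t) (Ninv H); gsimpl.
Qed.

(* Off N, pi_N(f) is a sum of nonpositive values of f, one of which is f t. *)
Lemma F_term_nonpos {y} t : ~ N y -> (IF E y t THEN f t ELSE 0) <= 0.
Proof.
move=> Ny; case: dec => [Hyt|_]; last lra.
apply: f_nonpos => t1; apply: Ny; move: Hyt; rewrite t1 gmulr1 => /Ninv.
by rewrite ginvK.
Qed.

Lemma F_nonpos {y} : ~ N y -> F y <= 0.
Proof. by move=> Ny; apply: lsum_nonpos => t _; apply: F_term_nonpos. Qed.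

Lemma F_le_f {t} : ~ N t -> F t <= f t.
Proof.
move=> Nt; case: (Req_dec (f t) 0) => [->|ft]; first exact: F_nonpos.
have -> : f t = IF E t t THEN f t ELSE 0 by case: dec => // -[]; apply: E_refl.
apply: lsum_le_term; first exact: (proj2 f_supp).
by move=> b _; apply: F_term_nonpos.
Qed.

Local Notation L u z := (qconv N u F z).

Lemma L_ci u {z z'} : E z z' -> L u z = L u z'.
Proof. by move=> H; apply: lsum_ext => r _; congr (_ * _); apply: F_ci; apply/E_lmul. Qed.
Lemma L_plus u v z : L (fun w => u w + v w) z = L u z + L v z.
Proof. by rewrite /qconv -lsum_plus; apply: lsum_ext => r _; ring. Qed.
Lemma L_scal c u z : L (fun w => c * u w) z = c * L u z.
Proof. by rewrite /qconv -lsum_scal; apply: lsum_ext => r _; ring. Qed.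
Lemma L_opp u z : L (fun w => - u w) z = - L u z.
Proof.
rewrite /qconv (lsum_ext _ _ (fun r => -1 * (u r * F (gmul (ginv r) z)))).
  by rewrite lsum_scal; ring.
by move=> r _; ring.
Qed.
Lemma L_const c z : L (fun _ => c) z = 0.
Proof. by rewrite /qconv lsum_scal F_sum_inv Rmult_0_r. Qed.

Lemma L_translate u y z : coset_invariant N u ->
  L (fun w => u (gmul y w)) z = L u (gmul y z).
Proof.
move=> Hu; rewrite /qconv -(sum_T_translate (fun r => u r * F (gmul (ginv r) (gmul y z))) y).
  by apply: lsum_ext => r _; gsimpl.
by move=> r r' H; rewrite (Hu _ _ H) (F_inv_ci _ H).
Qed.

Lemma L_sum u : lsum T (fun z => L u z) = 0.
Proof.
rewrite /qconv lsum_swap lsum_zero // => r _.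
by rewrite lsum_scal F_sum_translate Rmult_0_r.
Qed.

(* At a maximum point x of u, -(L u x) is a sum of nonpositive terms
   (u x - u r) F (r^-1 x), so it is bounded by each of them. *)
Section MaximumPoint.
Variable u : G -> R.
Hypothesis Hu : coset_invariant N u.
Variable x0 : G.
Hypothesis u_max : forall z, u z <= u x0.

Lemma max_point_ineq {x} r : u x = u x0 -> - L u x <= (u x0 - u r) * F (gmul (ginv r) x).
Proof.
move=> ux; have [r' [Hr' Hr'r]] := T_cover r.
rewrite -(Hu _ _ Hr'r) -(F_inv_ci _ Hr'r).
have sum_eq : lsum T (fun r => (u x0 - u r) * F (gmul (ginv r) x)) = - L u x.
  rewrite (lsum_ext _ _ (fun r => u x0 * F (gmul (ginv r) x) - u r * F (gmul (ginv r) x))).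
    by rewrite lsum_minus lsum_scal F_sum_inv /qconv; ring.
  by move=> r1 _; ring.
rewrite -sum_eq; apply: lsum_le_term => // r1 _; case: (classic (E r1 x)) => H.
- by rewrite (Hu _ _ H) ux; lra.
- by have := F_nonpos H; have := u_max r1; nra.
Qed.

Lemma max_propagates x t : u x = u x0 -> L u x <= 0 -> f t <> 0 -> u (gmul x t) = u x0.
Proof.
move=> ux Lx ft; case: (classic (N t)) => Nt.
  by rewrite -(Hu x) //; gsimpl.
have := max_point_ineq (gmul x t) ux; rewrite ginvM gmulA' gmulVl gmulr1.
have Nt' : ~ N (ginv t) by move=> /Ninv; rewrite ginvK.
have := F_le_f Nt'; rewrite -f_sym.
have := f_neg ft Nt; have := u_max (gmul x t); nra.
Qed.

End MaximumPoint.
Arguments max_point_ineq {u} Hu {x0} u_max {x} r.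
Arguments max_propagates {u} Hu {x0} u_max {x t}.

Lemma exists_max {u : G -> R} : coset_invariant N u -> exists x0, forall z, u z <= u x0.
Proof.
move=> Hu; have [m [Hm u_max]] := list_argmax T u T_nil.
by exists m => z; have [r [Hr Hrz]] := T_cover z; rewrite -(Hu _ _ Hrz); apply: u_max.
Qed.

(* Maximum principle: if L u <= 0 off the coset of a, then u is maximal at a.
   The set where u attains its maximum is stable under supp f, which
   generates G, so it contains a. *)
Lemma max_principle (u : G -> R) (a : G) : coset_invariant N u ->
  (forall z, ~ E z a -> L u z <= 0) -> forall z, u z <= u a.
Proof.
move=> Hu La; have [x0 u_max] := exists_max Hu.
case: (Rle_dec (u x0) (u a)) => [x0a z|x0a]; first by have := u_max z; lra.
exfalso; have stable : forall x t, u x = u x0 -> f t <> 0 -> u (gmul x t) = u x0.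
  move=> x t ux ft; apply: (max_propagates Hu u_max ux _ ft); apply: La => xa.
  by rewrite (Hu _ _ xa) in ux; lra.
have supp_sym : forall s, f s <> 0 -> f (ginv s) <> 0 by move=> s; rewrite -f_sym.
have := gen_right_stable (fun s => f s <> 0) (fun x => u x = u x0)
  supp_sym stable _ (f_gen (gmul (ginv x0) a)) x0 erefl.
by rewrite gmulVK; lra.
Qed.

Lemma L_kernel (u : G -> R) : coset_invariant N u -> (forall z, L u z = 0) ->
  forall z w, u z = u w.
Proof. by move=> Hu Lu z w; apply: Rle_antisym; apply: max_principle => // y _; rewrite Lu; lra. Qed.

Definition extend (x : G -> R) (z : G) : R := lsum T (fun r => IF E r z THEN x r ELSE 0).

Lemma extend_ci x : coset_invariant N (extend x).
Proof.
move=> z z' H; apply: lsum_ext => r _ /=; apply: ifE.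
by split => H'; [apply: E_trans H' H | apply: E_trans H' (E_sym H)].
Qed.
Lemma extend_T x {c} : In c T -> extend x c = x c.
Proof. by move=> Hc; rewrite /extend (sum_T_pick_rep x Hc) //; apply: E_refl. Qed.
Lemma L_extend x {j} : In j T -> L (extend x) j = lsum T (fun i => x i * F (gmul (ginv i) j)).
Proof. by move=> Hj; apply: lsum_ext => r Hr; rewrite extend_T. Qed.

Lemma L_onto (b : G -> R) : coset_invariant N b -> lsum T b = 0 ->
  exists u, coset_invariant N u /\ forall z, L u z = b z.
Proof.
move=> Hb b0.
have ker_T : forall x : G -> R,
    (forall j, In j T -> lsum T (fun i => x i * F (gmul (ginv i) j)) = 0) ->
    forall i j, In i T -> In j T -> x i = x j.
  move=> x Hx i j Hi Hj; rewrite -(extend_T x Hi) -(extend_T x Hj).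
  apply: L_kernel; first exact: extend_ci.
  by move=> z; have [k [Hk Hkz]] := T_cover z; rewrite -(L_ci _ Hkz) L_extend // Hx.
have [x Hx] := zero_sum_solvable T gone (fun i j => F (gmul (ginv i) j)) T_nodup T_nil
  (fun i _ => F_sum_translate (ginv i)) ker_T b b0.
exists (extend x); split; first exact: extend_ci.
by move=> z; have [j [Hj Hjz]] := T_cover z; rewrite -(L_ci _ Hjz) -(Hb _ _ Hjz) L_extend // Hx.
Qed.

Definition coset_ind (a z : G) : R := IF E z a THEN 1 ELSE 0.

Lemma coset_ind_in {a z} : E z a -> coset_ind a z = 1.
Proof. by rewrite /coset_ind; case: dec. Qed.
Lemma coset_ind_out {a z} : ~ E z a -> coset_ind a z = 0.
Proof. by rewrite /coset_ind; case: dec. Qed.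
Lemma coset_ind_ci a : coset_invariant N (coset_ind a).
Proof.
move=> z z' H; apply: ifE.
by split => H'; [apply: E_trans (E_sym H) H' | apply: E_trans H H'].
Qed.
Lemma coset_ind_translate x a z : coset_ind a (gmul (ginv x) z) = coset_ind (gmul x a) z.
Proof. by apply: ifE; gsimpl. Qed.
Lemma coset_ind_sum a : lsum T (coset_ind a) = 1.
Proof. exact: sum_T_const. Qed.

Definition dipole_bound (t : G) (K : R) : Prop :=
  exists u, coset_invariant N u /\ (forall z, L u z = coset_ind t z - coset_ind gone z) /\
    forall z w, u z - u w <= K.

Lemma dipole_bound_one : dipole_bound gone 0.
Proof.
exists (fun _ => 0); split; first by []; split; last by move=> z w; lra.
by move=> z; rewrite L_const; ring.
Qed.

(* The dipole equation is solvable, its right side having zero sum. *)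
Lemma dipole_solvable t : exists u, coset_invariant N u /\
  forall z, L u z = coset_ind t z - coset_ind gone z.
Proof.
apply: L_onto; last by rewrite lsum_minus !coset_ind_sum; ring.
by move=> z z' H; rewrite /= (coset_ind_ci t _ _ H) (coset_ind_ci gone _ _ H).
Qed.

(* For s in supp f outside N, the maximum principle places the maximum of the
   dipole solution u at s and its minimum at 1; the inequality at the maximum
   point s tested against r = 1 reads -1 <= (u s - u 1) F s, and
   F s <= f s < 0 bounds u s - u 1 by -1/f s. *)
Lemma dipole_bound_supp_out s : f s <> 0 -> ~ N s -> dipole_bound s (- / f s).
Proof.
move=> fs Ns; have Es1 : ~ E s gone by move=> /Ninv; rewrite gmulr1 ginvK.
have [u [Hu Lu]] := dipole_solvable s.
exists u; split => //; split => //.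
have u_max : forall z, u z <= u s.
  apply: max_principle => // z zs; rewrite Lu (coset_ind_out zs).
  by have := Rle_0_1; rewrite /coset_ind; case: dec => _; lra.
have u_min : forall z, u gone <= u z.
  move=> z; suff : - u z <= - u gone by lra.
  apply: (max_principle (fun z => - u z)) => [a b H|y y1]; first by rewrite (Hu _ _ H).
  by rewrite L_opp Lu (coset_ind_out y1) /coset_ind; case: dec => _; lra.
have at_s := max_point_ineq Hu u_max gone erefl.
rewrite Lu ginv1 gmul1l (coset_ind_in (E_refl s)) (coset_ind_out Es1) in at_s.
have gap : u s - u gone <= - / f s.
  have := F_le_f Ns; have := u_min s; have := f_neg fs Ns => fs_neg.
  have : f s * / f s = 1 by field; lra.
  nra.
by move=> z w; have := u_max z; have := u_min w; lra.
Qed.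

Lemma dipole_bound_supp s : f s <> 0 -> dipole_bound s (Rabs (/ f s)).
Proof.
move=> fs; case: (classic (N s)) => Ns.
- exists (fun _ => 0); split; first by []; split; last by move=> z w; have := Rabs_pos (/ f s); lra.
  move=> z; rewrite L_const /coset_ind (ifE _ _ (_ : E z s <-> E z gone)); first ring.
  have Es1 : E s gone by have := Ninv Ns; gsimpl.
  by split => H; [apply: E_trans H Es1 | apply: E_trans H (E_sym Es1)].
- have [u [Hu [Lu osc]]] := dipole_bound_supp_out _ fs Ns.
  exists u; split => //; split => // z w.
  by have := osc z w; have := Rle_abs (- / f s); rewrite Rabs_Ropp; lra.
Qed.

(* Dipoles compose: u1 + u2(x^-1 .) solves the equation for x y. *)
Lemma dipole_bound_mul x y K1 K2 :
  dipole_bound x K1 -> dipole_bound y K2 -> dipole_bound (gmul x y) (K1 + K2).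
Proof.
move=> [u1 [Hu1 [Lu1 osc1]]] [u2 [Hu2 [Lu2 osc2]]].
exists (fun z => u1 z + u2 (gmul (ginv x) z)); split; [|split].
- move=> z z' H; rewrite (Hu1 _ _ H) (Hu2 (gmul (ginv x) z) (gmul (ginv x) z')) //.
  exact/E_lmul.
- move=> z; rewrite L_plus L_translate // Lu1 Lu2 !coset_ind_translate gmulr1; ring.
- by move=> z w; have := osc1 z w; have := osc2 (gmul (ginv x) z) (gmul (ginv x) w); lra.
Qed.

(* Dipoles invert: -u(x .) solves the equation for x^-1. *)
Lemma dipole_bound_inv x K : dipole_bound x K -> dipole_bound (ginv x) K.
Proof.
move=> [u [Hu [Lu osc]]].
exists (fun z => - u (gmul x z)); split; [|split].
- by move=> z z' H; rewrite (Hu (gmul x z) (gmul x z')) //; apply/E_lmul.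
- move=> z; rewrite L_opp L_translate // Lu.
  have shift a : coset_ind a (gmul x z) = coset_ind (gmul (ginv x) a) z.
    by rewrite -coset_ind_translate ginvK.
  rewrite !shift gmulr1 gmulVl; ring.
- by move=> z w; have := osc (gmul x w) (gmul x z); lra.
Qed.

Lemma proj_coset_ind (g : G -> R) z :
  proj N g z = lsum (supp_list g) (fun t => g t * coset_ind t z).
Proof. by apply: lsum_ext => t _; rewrite /coset_ind; case: dec => _; ring. Qed.

(* A solution h of  L h = sum_t g_t 1_{tN}  differs by a constant from a
   superposition u of dipole solutions: L (h - u) = (sum_t g_t) 1_N, whose
   sum over G/N forces sum_t g_t = 0, so h - u lies in the kernel of L. *)
Lemma solution_eq_superposition (g : G -> R) (l : list G) (h u : G -> R) :
  coset_invariant N h -> coset_invariant N u ->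
  (forall z, L h z = lsum l (fun t => g t * coset_ind t z)) ->
  (forall z, L u z = lsum l (fun t => g t * (coset_ind t z - coset_ind gone z))) ->
  forall x y, h x - h y = u x - u y.
Proof.
move=> Hh Hu Lh Lu.
pose v z := h z + - u z.
have Lv : forall z, L v z = lsum l g * coset_ind gone z.
  move=> z; rewrite L_plus L_opp Lh Lu.
  rewrite (lsum_ext l (fun t => g t * (coset_ind t z - coset_ind gone z))
                       (fun t => g t * coset_ind t z - coset_ind gone z * g t)).
    by rewrite lsum_minus lsum_scal; ring.
  by move=> t _; ring.
have g0 : lsum l g = 0.
  have := L_sum v; rewrite (lsum_ext _ _ _ (fun z _ => Lv z)) lsum_scal coset_ind_sum.
  lra.
have Hv : coset_invariant N v by move=> z z' H; rewrite /v (Hh _ _ H) (Hu _ _ H).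
have v_const := L_kernel v Hv (fun z => ltac:(rewrite Lv g0; ring)).
by move=> x y; have := v_const x y; rewrite /v; lra.
Qed.

End Quotient.

Definition normal_family {G : Group} (N : nat -> G -> Prop) : Prop :=
  forall n, is_subgroup (N n) /\ is_normal (N n) /\ finite_index (N n).

Lemma uniform_dipole_bound {G : Group} {N : nat -> G -> Prop} {f : G -> R} :
  normal_family N -> well_balanced f ->
  forall t, exists K, 0 <= K /\ forall n, dipole_bound G (N n) f t K.
Proof.
move=> HN Hf t; have [_ [_ [_ [_ f_gen]]]] := Hf.
elim: (f_gen t) => {t} [|s fs|x y _ [K1 [K1p H1]] _ [K2 [K2p H2]]|x _ [K [Kp H]]].
- exists 0; split => [|n]; first lra.
  by case: (HN n) => Ns [Nn Ni]; apply: dipole_bound_one.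
- exists (Rabs (/ f s)); split => [|n]; first exact: Rabs_pos.
  by case: (HN n) => Ns [Nn Ni]; apply: dipole_bound_supp.
- exists (K1 + K2); split => [|n]; first lra.
  by case: (HN n) => Ns [Nn Ni]; apply: (dipole_bound_mul _ _ Ns Nn Ni).
- exists K; split => // n.
  by case: (HN n) => Ns [Nn Ni]; apply: (dipole_bound_inv _ _ Ns Nn Ni).
Qed.

Lemma dipole_superposition {G : Group} {N : nat -> G -> Prop} {f : G -> R} (g : G -> R) :
  normal_family N -> well_balanced f -> forall l : list G,
  exists C, 0 <= C /\ forall n, exists u, coset_invariant (N n) u /\
    (forall z, qconv (N n) u (proj (N n) f) z =
       lsum l (fun t => g t * (coset_ind G (N n) t z - coset_ind G (N n) gone z))) /\
    forall z w, u z - u w <= C.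
Proof.
move=> HN Hf; elim => [|t l [C [C0 IH]]].
  exists 0; split => [|n]; first lra.
  exists (fun _ => 0); split => //; split => [z|z w]; last lra.
  by case: (HN n) => Ns [Nn Ni]; rewrite lsum_nil; apply: L_const.
have [K [K0 HK]] := uniform_dipole_bound HN Hf t.
exists (Rabs (g t) * K + C); split => [|n]; first by have := Rabs_pos (g t); nra.
have [u1 [Hu1 [Lu1 osc1]]] := HK n.
have [u2 [Hu2 [Lu2 osc2]]] := IH n.
exists (fun z => g t * u1 z + u2 z); split; [|split].
- by move=> z z' H; rewrite (Hu1 _ _ H) (Hu2 _ _ H).
- by move=> z; rewrite lsum_cons L_plus L_scal Lu1 Lu2.
- move=> z w; have := osc2 z w; have := osc1 z w; have := osc1 w z.
  have := Rabs_pos (g t); case: (Rle_dec 0 (g t)) => gt.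
  + by rewrite Rabs_right; [nra | lra].
  + by rewrite Rabs_left; [nra | lra].
Qed.

Theorem lemma5p4 (G : Group) (N : nat -> G -> Prop)
  (Hfg : finitely_generated G) (Hinf : infinite_group G)
  (HN : forall n, is_subgroup (N n) /\ is_normal (N n) /\ finite_index (N n))
  (f g : G -> R) (Hf : well_balanced f) (Hg : finsupp g) :
  exists C : R, 0 < C /\
    forall (n : nat) (h : G -> R), coset_invariant (N n) h ->
      (forall x : G, proj (N n) g x = qconv (N n) h (proj (N n) f) x) ->
      forall x y : G, h x - h y <= C.
Proof.
have [C [C0 HC]] := dipole_superposition g HN Hf (supp_list g).
exists (C + 1); split => [|n h Hh Lh x y]; first lra.
have [u [Hu [Lu osc_u]]] := HC n.
have [Ns [Nn Ni]] := HN n.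
have Lh' : forall z, qconv (N n) h (proj (N n) f) z =
    lsum (supp_list g) (fun t => g t * coset_ind G (N n) t z).
  by move=> z; rewrite -Lh proj_coset_ind.
have := solution_eq_superposition _ _ Ns Nn Ni _ Hf _ _ _ _ Hh Hu Lh' Lu x y.
by have := osc_u x y; lra.
Qed.
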